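(* Let $n=2k$ and let $P\in\mathbb{H}_n$ be a rank-$k$ orthogonal projection. Then $S^{\mathbb{H}}(P)\cup(-S^{\mathbb{H}}(P))$ contains no two-dimensional real linear subspace of $\mathbb{H}_n$.
   Context: $\mathbb{H}_n$ is the real space of $n\times n$ Hermitian matrices. $w_k(A)=\max\{|\operatorname{tr}(AP)|: P=P^*=P^2,\operatorname{tr}P=k\}$. For a rank-$k$ orthogonal projection $P$, $S^{\mathbb{H}}(P)=\{B\in\mathbb{H}_n:\operatorname{tr}(BP)=w_k(B)\}$. *)

From HB Require Import structures.
From mathcomp Require Import all_boot all_order all_algebra.
From mathcomp Require Import complex.
From mathcomp Require Import classical_sets reals.
Set Implicit Arguments. Unset Strict Implicit. Unset Printing Implicit Defensive.
Import Order.TTheory GRing.Theory Num.Theory.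
Local Open Scope ring_scope.
Local Open Scope classical_set_scope.

Definition is_hermitian (R : realType) (n : nat) (A : 'M[R[i]]_n) : Prop :=
  map_mx (@conjc R) A^T = A.

Definition is_rank_proj (R : realType) (n k : nat) (P : 'M[R[i]]_n) : Prop :=
  [/\ is_hermitian P, P *m P = P & \tr P = k%:R].

(* w_k(A) = max { |tr(AP)| : P = P^* = P^2, tr P = k }  (taken as a supremum
   of real numbers; complex.Re `|z| is the real modulus of z) *)
Definition wk (R : realType) (n k : nat) (A : 'M[R[i]]_n) : R :=
  sup [set complex.Re `|\tr (A *m Q)| | Q in [set Q | is_rank_proj k Q]].

Definition SH (R : realType) (n k : nat) (P : 'M[R[i]]_n) : set 'M[R[i]]_n :=
  [set B | is_hermitian B /\ \tr (B *m P) = ((wk k B)%:C)%C].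

Definition rC (R : realType) (a : R) : R[i] := (a%:C)%C.

From HB Require Import structures.
From mathcomp Require Import all_boot all_order all_algebra.
From mathcomp Require Import complex.
From mathcomp Require Import classical_sets reals.
From mathcomp Require Import ring zify.
Set Implicit Arguments. Unset Strict Implicit. Unset Printing Implicit Defensive.
Import Order.TTheory GRing.Theory Num.Theory.
Local Open Scope ring_scope.

(* If B lies in S(P) or in -S(P) then tr(BP) is real, and tr(BP) = 0 forces
   w_k(B) = 0, i.e. tr(BQ) = 0 for every rank-k projection Q.  For 0 < k < n
   this forces B = 0, already for the projections D_S + v v^* / |v|^2 with D_S
   a diagonal projection of rank k - 1 and v = e_i + u e_j, u in
   {0, 1, -1, i, -i}.  On a two-dimensional real subspace, D |-> tr(DP) is a
   real linear functional, so it vanishes at some nonzero D, and then D = 0. *)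

Lemma ex_subset_card (T : finType) (A : {set T}) m :
  (m <= #|A|)%N -> exists2 S : {set T}, S \subset A & #|S| = m.
Proof.
move=> le_mA; exists [set x in take m (enum A)].
  by apply/fintype.subsetP => x; rewrite inE => /mem_take; rewrite mem_enum.
rewrite cardsE (card_uniqP _) ?take_uniq ?enum_uniq // size_takel //.
by rewrite -cardE.
Qed.

Section ConjTranspose.
Variable R : realType.

Definition conjT m n (M : 'M[R[i]]_(m, n)) : 'M[R[i]]_(n, m) :=
  map_mx (@conjc R) M^T.

Lemma conjT0 m n : conjT (0 : 'M[R[i]]_(m, n)) = 0.
Proof. by apply/matrixP => a b; rewrite !mxE rmorph0. Qed.

Lemma conjTD m n (A B : 'M[R[i]]_(m, n)) : conjT (A + B) = conjT A + conjT B.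
Proof. by apply/matrixP => a b; rewrite !mxE rmorphD. Qed.

Lemma conjTZ m n (t : R[i]) (A : 'M[R[i]]_(m, n)) :
  conjT (t *: A) = conjc t *: conjT A.
Proof. by apply/matrixP => a b; rewrite !mxE rmorphM. Qed.

Lemma conjTM m n p (A : 'M[R[i]]_(m, n)) (B : 'M[R[i]]_(n, p)) :
  conjT (A *m B) = conjT B *m conjT A.
Proof. by rewrite /conjT trmx_mul map_mxM. Qed.

Lemma conjTK m n (A : 'M[R[i]]_(m, n)) : conjT (conjT A) = A.
Proof. by apply/matrixP => a b; rewrite !mxE conjcK. Qed.

Lemma conj_rC (r : R) : conjc (rC r) = rC r.
Proof. by rewrite /rC /= oppr0. Qed.

End ConjTranspose.

Section RankProjections.
Variables (R : realType) (n : nat).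
Implicit Types (C Q : 'M[R[i]]_n) (S : {set 'I_n}) (x : 'cV[R[i]]_n).

Lemma hermitian_idem_entry_le1 Q : is_hermitian Q -> Q *m Q = Q ->
  forall a b, `|Q a b| <= 1.
Proof.
move=> hQ idQ a b.
have Qaa : Q a a = \sum_c `|Q a c| ^+ 2.
  rewrite -{1}idQ mxE; apply: eq_bigr => c _.
  by rewrite sqr_normc -{2}hQ !mxE.
have le_Qaa c : `|Q a c| ^+ 2 <= Q a a.
  by rewrite Qaa (bigD1 c) //= lerDl sumr_ge0 // => d _; rewrite exprn_ge0.
have Qaa_ge0 : 0 <= Q a a by rewrite Qaa sumr_ge0 // => d _; rewrite exprn_ge0.
have Qaa_le1 : Q a a <= 1.
  have [->|nzQ] := eqVneq (Q a a) 0; first exact: ler01.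
  have Qaa_gt0 : 0 < Q a a by rewrite lt_def nzQ Qaa_ge0.
  by rewrite -(ler_pM2l Qaa_gt0) mulr1 -expr2 -{1}(ger0_norm Qaa_ge0).
have := le_trans (le_Qaa b) Qaa_le1.
by rewrite -[X in _ <= X -> _](expr1n _ 2) ler_pXn2r ?nnegrE.
Qed.

Lemma normr_tr_mul_rank_proj_le k C Q : is_rank_proj k Q ->
  `|\tr (C *m Q)| <= \sum_a \sum_b `|C a b|.
Proof.
case=> hQ idQ _; apply: le_trans (ler_norm_sum _ _ _) _.
apply: ler_sum => a _; rewrite mxE.
apply: le_trans (ler_norm_sum _ _ _) _; apply: ler_sum => b _.
rewrite normrM -{2}(mulr1 `|C a b|) ler_wpM2l //.
exact: hermitian_idem_entry_le1.
Qed.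

Lemma wk_eq0_tr_mul k C : wk k C = 0 ->
  forall Q, is_rank_proj k Q -> \tr (C *m Q) = 0.
Proof.
move=> wk0 Q hQ.
have ub : has_ubound [set complex.Re `|\tr (C *m Q')| |
                      Q' in [set Q' | is_rank_proj k Q']].
  exists (complex.Re (\sum_a \sum_b `|C a b|)) => _ [Q' hQ' <-].
  by move: (normr_tr_mul_rank_proj_le C hQ'); rewrite lecE => /andP[_].
have := ub_le_sup ub; rewrite -/(wk k C) wk0 => le_wk.
by apply/eqP; rewrite -normr_le0 lecE /= eqxx le_wk //; exists Q.
Qed.

Lemma mxtrace_mulNmx C Q : \tr (- C *m Q) = - \tr (C *m Q).
Proof. by rewrite mulNmx linearN. Qed.

Definition proj_set S : 'M[R[i]]_n := diag_mx (\row_a (a \in S)%:R).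

Lemma proj_set_hermitian S : is_hermitian (proj_set S).
Proof.
apply/matrixP => a b; rewrite !mxE.
by have [<-|_] := eqVneq a b; rewrite ?mulr1n ?mulr0n ?rmorph_nat ?rmorph0.
Qed.

Lemma proj_set_idem S : proj_set S *m proj_set S = proj_set S.
Proof.
rewrite mulmx_diag; congr diag_mx; apply/rowP => a; rewrite !mxE.
by case: (a \in S); rewrite ?mulr1 ?mulr0.
Qed.

Lemma mxtrace_proj_set S : \tr (proj_set S) = #|S|%:R.
Proof.
rewrite mxtrace_diag -sumr_const [RHS]big_mkcond; apply: eq_bigr => a _.
by rewrite mxE; case: ifP.
Qed.

Lemma mxtrace_mul_proj_set C S : \tr (C *m proj_set S) = \sum_(s in S) C s s.
Proof.
rewrite mul_mx_diag /mxtrace [RHS]big_mkcond; apply: eq_bigr => a _.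
by rewrite !mxE; case: (a \in S); rewrite ?mulr1 ?mulr0.
Qed.

Lemma proj_set_mul_eq0 S x : {in S, forall a, x a 0 = 0} -> proj_set S *m x = 0.
Proof.
move=> x0; rewrite mul_diag_mx; apply/matrixP => a b; rewrite !mxE (ord1 b).
by case: (boolP (a \in S)) => [/x0->|_]; rewrite ?mulr0 ?mul0r.
Qed.

(* The projection onto span(e_s : s in S) + C x, where c = |x|^2. *)
Definition proj_set_line S x (c : R) : 'M[R[i]]_n :=
  proj_set S + rC c^-1 *: (x *m conjT x).

Lemma proj_set_line_rank_proj k S x (c : R) :
  0 < c -> conjT x *m x = (rC c)%:M -> {in S, forall a, x a 0 = 0} ->
  #|S|.+1 = k -> is_rank_proj k (proj_set_line S x c).
Proof.
move=> c_gt0 xx x0 cardS; have c_neq0 : c != 0 by rewrite gt_eqF.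
have hermD : conjT (proj_set S) = proj_set S := proj_set_hermitian S.
have Dx : proj_set S *m x = 0 by apply: proj_set_mul_eq0.
have xD : conjT x *m proj_set S = 0 by rewrite -hermD -conjTM Dx conjT0.
have cc : rC c^-1 * rC c = 1 by rewrite /rC -rmorphM mulVf // rmorph1.
split.
- by rewrite /is_hermitian -/(conjT _) conjTD conjTZ conjTM conjTK conj_rC hermD.
- rewrite /proj_set_line; set X := x *m conjT x.
  have DX : proj_set S *m X = 0 by rewrite /X mulmxA Dx mul0mx.
  have XD : X *m proj_set S = 0 by rewrite /X -mulmxA xD mulmx0.
  have XX : X *m X = rC c *: X.
    by rewrite /X mulmxA -(mulmxA x) xx mul_mx_scalar -scalemxAl.
  rewrite mulmxDl !mulmxDr proj_set_idem -!scalemxAr -!scalemxAl DX XD XX.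
  by rewrite !scaler0 addr0 add0r !scalerA -mulrA cc mulr1.
- rewrite mxtraceD mxtraceZ mxtrace_proj_set mxtrace_mulC xx mxtrace_scalar.
  by rewrite mulr1n cc -cardS mulrSr.
Qed.

Lemma mxtrace_mul_proj_set_line C S x (c : R) :
  \tr (C *m proj_set_line S x c) =
  \tr (C *m proj_set S) + rC c^-1 * (conjT x *m C *m x) 0 0.
Proof.
rewrite /proj_set_line mulmxDr mxtraceD -scalemxAr mxtraceZ.
by rewrite (mulmxA C x) (mxtrace_mulC (C *m x)) mulmxA trace_mx11.
Qed.

Definition pair_vec (a b : 'I_n) (u : R[i]) : 'cV[R[i]]_n :=
  delta_mx a 0 + u *: delta_mx b 0.

Lemma conjT_pair_vec a b u :
  conjT (pair_vec a b u) = delta_mx 0 a + conjc u *: delta_mx 0 b.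
Proof.
apply/matrixP => c d; rewrite !mxE (ord1 c) !eqxx /= !andbT.
by rewrite rmorphD rmorphM !rmorph_nat.
Qed.

Lemma pair_vec_normsq a b u : a != b ->
  conjT (pair_vec a b u) *m pair_vec a b u = (1 + conjc u * u)%:M.
Proof.
move=> neq_ab; rewrite conjT_pair_vec mulmxDl !mulmxDr -!scalemxAl -!scalemxAr.
rewrite !mul_delta_mx_cond eqxx (negbTE neq_ab) eq_sym (negbTE neq_ab).
apply/matrixP => c d; rewrite !mxE (ord1 c) (ord1 d) /= eqxx.
by rewrite !mxE eqxx !mulr0 !addr0 !mulr1n mulr1 add0r.
Qed.

Lemma pair_vec_form a b u C :
  (conjT (pair_vec a b u) *m C *m pair_vec a b u) 0 0 =
  C a a + u * C a b + conjc u * C b a + conjc u * u * C b b.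
Proof.
rewrite conjT_pair_vec /pair_vec mulmxDl -scalemxAl -!rowE !mulmxDr.
by rewrite -!scalemxAr -!colE !mxE; ring.
Qed.

Section TracesVanish.
Variables (k : nat) (C : 'M[R[i]]_n).
Hypothesis trC0 : forall Q, is_rank_proj k Q -> \tr (C *m Q) = 0.

Section Pair.
Variables (S : {set 'I_n}) (a b : 'I_n).
Hypotheses (neq_ab : a != b) (aS : a \notin S) (bS : b \notin S).
Hypothesis cardS : #|S|.+1 = k.

Let t := \tr (C *m proj_set S).

Lemma tr_pair_line_eq0 (u : R[i]) (c : R) : 0 < c -> 1 + conjc u * u = rC c ->
  t + rC c^-1 * (C a a + u * C a b + conjc u * C b a + conjc u * u * C b b) = 0.
Proof.
move=> c_gt0 normu; rewrite -pair_vec_form -mxtrace_mul_proj_set_line.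
apply: trC0; apply: proj_set_line_rank_proj => //.
  by rewrite pair_vec_normsq // normu.
move=> s sS; have ne_sa : s != a by apply: contraNneq aS => <-.
have ne_sb : s != b by apply: contraNneq bS => <-.
by rewrite !mxE (negbTE ne_sa) (negbTE ne_sb) mulr0 addr0.
Qed.

Lemma diag_add_tr_proj_set_eq0 : C a a + t = 0.
Proof.
have := @tr_pair_line_eq0 0 1 ltr01.
by rewrite rmorph0 !mul0r !addr0 /rC invr1 rmorph1 mul1r addrC; apply.
Qed.

(* Testing u = 1, -1, 'i, -'i (so |u|^2 = 1) isolates C a b + C b a and
   'i (C a b - C b a). *)
Lemma offdiag_eq0 : C a b = 0.
Proof.
have r2 : rC 2 = 2 :> R[i] by rewrite /rC rmorph_nat.
have ii : 'i%C * 'i%C = -1 :> R[i] by rewrite -expr2 sqr_i.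
have conj_i : conjc 'i%C = - 'i%C :> R[i].
  by apply/eqP; rewrite eq_complex /= oppr0 !eqxx.
have conj_mi : conjc (- 'i%C) = 'i%C :> R[i].
  by apply/eqP; rewrite eq_complex /= oppr0 opprK !eqxx.
have ltr02 : (0 : R) < 2 by [].
have two : 1 + 1 = 2 :> R[i] by [].
have e1 := @tr_pair_line_eq0 1 2 ltr02.
have em1 := @tr_pair_line_eq0 (-1) 2 ltr02.
have ei := @tr_pair_line_eq0 'i%C 2 ltr02.
have emi := @tr_pair_line_eq0 (- 'i%C) 2 ltr02.
rewrite rmorph1 !mul1r r2 in e1; rewrite rmorphN1 mulrNN mul1r r2 in em1.
rewrite conj_i mulNr ii opprK r2 in ei; rewrite conj_mi mulrN ii opprK r2 in emi.
have h2 : rC 2^-1 * 2 = 1 :> R[i].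
  by rewrite -r2 /rC -rmorphM mulVf ?rmorph1 ?pnatr_eq0.
have sum0 : C a b + C b a = 0.
  by rewrite -[LHS]mul1r -h2 -[RHS](subrr 0) -{1}(e1 two) -(em1 two); ring.
have diff0 : 'i%C * (C a b - C b a) = 0.
  by rewrite -[LHS]mul1r -h2 -[RHS](subrr 0) -{1}(ei two) -(emi two); ring.
have i_neq0 : 'i%C != 0 :> R[i] by rewrite eq_complex /= oner_eq0 andbF.
move/eqP: diff0; rewrite mulf_eq0 (negbTE i_neq0) subr_eq0 => /eqP eq_ab.
by move/eqP: sum0; rewrite eq_ab -mulr2n mulrn_eq0 => /eqP.
Qed.

End Pair.

Hypothesis k_gt0 : (0 < k)%N.
Hypothesis k_lt_n : (k < n)%N.

Lemma ex_proj_set_avoid (a b : 'I_n) :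
  exists S : {set 'I_n}, [/\ #|S|.+1 = k, a \notin S & b \notin S].
Proof.
have /ex_subset_card [S sub_S cardS] : (k.-1 <= #|~: [set a; b]|)%N.
  have := cardsC [set a; b]; rewrite card_ord cards2; case: (a != b) => /=; lia.
exists S; split; first by rewrite cardS prednK.
- by apply/negP => /(fintype.subsetP sub_S); rewrite !inE eqxx.
- by apply/negP => /(fintype.subsetP sub_S); rewrite !inE eqxx orbT.
Qed.

Lemma diag_const (a b : 'I_n) : C a a = C b b.
Proof.
have [<-//|neq_ab] := eqVneq a b.
have [S [cardS aS bS]] := ex_proj_set_avoid a b.
apply: (addIr (\tr (C *m proj_set S))).
rewrite (diag_add_tr_proj_set_eq0 neq_ab aS bS cardS).
by rewrite (diag_add_tr_proj_set_eq0 _ bS aS cardS) // eq_sym.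
Qed.

Lemma rank_proj_traces_eq0 : C = 0.
Proof.
apply/matrixP => a b; rewrite mxE.
have [<-|neq_ab] := eqVneq a b; last first.
  have [S [cardS aS bS]] := ex_proj_set_avoid a b.
  exact: offdiag_eq0 neq_ab aS bS cardS.
have /card_gt0P [j] : (0 < #|[set~ a]|)%N by rewrite cardsC1 card_ord; lia.
rewrite !inE eq_sym => neq_aj.
have [S [cardS aS jS]] := ex_proj_set_avoid a j.
have := diag_add_tr_proj_set_eq0 neq_aj aS jS cardS.
rewrite mxtrace_mul_proj_set (eq_bigr (fun=> C a a)) => [|s _]; last first.
  exact: diag_const.
rewrite sumr_const -mulrS cardS => /eqP.
by rewrite mulrn_eq0 (gtn_eqF k_gt0) => /eqP.
Qed.

End TracesVanish.

Lemma half_rank_proj_traces_eq0 k C : n = (2 * k)%N ->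
  (forall Q, is_rank_proj k Q -> \tr (C *m Q) = 0) -> C = 0.
Proof.
move=> n2k trC0; case: (posnP k) => [k0|k_gt0].
  by apply/matrixP => -[a a_lt]; exfalso; move: a_lt; rewrite n2k k0.
have k_lt_n : (k < n)%N by lia.
exact: rank_proj_traces_eq0 trC0 k_gt0 k_lt_n.
Qed.

End RankProjections.

Section SupportSet.
Variables (R : realType) (k n : nat) (P : 'M[R[i]]_n).

Lemma SH_or_opp_tr_real B : SH k P B \/ SH k P (- B) ->
  exists r : R, \tr (B *m P) = rC r.
Proof.
case=> -[_ trBP]; first by exists (wk k B).
exists (- wk k (- B)); by rewrite -[LHS]opprK -mxtrace_mulNmx trBP /rC rmorphN.
Qed.

Lemma SH_tr_eq0 B : SH k P B -> \tr (B *m P) = 0 ->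
  forall Q, is_rank_proj k Q -> \tr (B *m Q) = 0.
Proof.
case=> _ -> /(congr1 (@complex.Re R)) /= wk0.
exact: wk_eq0_tr_mul.
Qed.

Lemma SH_or_opp_eq0 B : n = (2 * k)%N -> SH k P B \/ SH k P (- B) ->
  \tr (B *m P) = 0 -> B = 0.
Proof.
move=> n2k [inS trBP|inS trBP]; apply: half_rank_proj_traces_eq0 n2k _ => Q hQ.
  exact: SH_tr_eq0 inS trBP Q hQ.
apply/eqP; rewrite -oppr_eq0 -mxtrace_mulNmx; apply/eqP.
by apply: SH_tr_eq0 inS _ Q hQ; rewrite mxtrace_mulNmx trBP oppr0.
Qed.

End SupportSet.

Local Open Scope classical_set_scope.

Theorem mainTheorem17 (R : realType) (k n : nat) (hn : n = (2 * k)%N)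
  (P : 'M[R[i]]_n) (hP : is_rank_proj k P) :
  ~ (exists A B : 'M[R[i]]_n,
        [/\ is_hermitian A, is_hermitian B,
            (forall a b : R, rC a *: A + rC b *: B = 0 -> a = 0 /\ b = 0) &
            (forall a b : R,
               SH k P (rC a *: A + rC b *: B) \/
               SH k P (- (rC a *: A + rC b *: B)))]).
Proof.
move=> [A [B [_ _ indep inS]]].
have e10 : rC 1 *: A + rC 0 *: B = A.
  by rewrite /rC rmorph1 rmorph0 scale1r scale0r addr0.
have e01 : rC 0 *: A + rC 1 *: B = B.
  by rewrite /rC rmorph1 rmorph0 scale1r scale0r add0r.
have inSA := inS 1 0; rewrite e10 in inSA.
have inSB := inS 0 1; rewrite e01 in inSB.
have [ra trA] := SH_or_opp_tr_real inSA.
have [rb trB] := SH_or_opp_tr_real inSB.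
have [ra0|ra_neq0] := eqVneq ra 0.
  have A0 : A = 0 by apply: SH_or_opp_eq0 hn inSA _; rewrite trA ra0 /rC rmorph0.
  by have [] := indep 1 0; rewrite ?e10 // => /eqP; rewrite oner_eq0.
have trD : \tr ((rC rb *: A + rC (- ra) *: B) *m P) = 0.
  rewrite mulmxDl mxtraceD -!scalemxAl !mxtraceZ trA trB /rC -!rmorphM -rmorphD.
  by rewrite mulNr mulrC subrr rmorph0.
have [_ /eqP] := indep rb (- ra) (SH_or_opp_eq0 hn (inS rb (- ra)) trD).
by rewrite oppr_eq0 (negbTE ra_neq0).
Qed.
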